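(* Let $G$ be a locally compact group with a compact open normal subgroup $A$ such that $G/A$ is isomorphic to an infinite subgroup of the (discrete) group $\mathbb{Q}$ of rational numbers. Then $G$ contains a discrete subgroup $H\cong G/A$ such that $G=AH$ and $A\cap H=\{1\}$, so that $G$ is the semidirect product $A\rtimes H$. *)

From Stdlib Require List.
From HB Require Import structures.
From mathcomp Require Import all_boot all_order all_algebra.
Set Implicit Arguments. Unset Strict Implicit. Unset Printing Implicit Defensive.
Import GRing.Theory.
Local Open Scope ring_scope.

Definition gset (T : Type) := T -> Prop.

Definition is_topology (T : Type) (opn : gset T -> Prop) : Prop :=
  [/\ opn (fun _ => True),
      (forall F : gset T -> Prop, (forall U, F U -> opn U) ->
          opn (fun x => exists2 U, F U & U x)) &
      (forall U V, opn U -> opn V -> opn (fun x => U x /\ V x))].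

Definition compact_set (T : Type) (opn : gset T -> Prop) (K : gset T) : Prop :=
  forall F : gset T -> Prop,
    (forall U, F U -> opn U) ->
    (forall x, K x -> exists2 U, F U & U x) ->
    exists s : list (gset T),
      (forall U, List.In U s -> F U) /\
      (forall x, K x -> exists2 U, List.In U s & U x).

Definition hausdorff (T : Type) (opn : gset T -> Prop) : Prop :=
  forall x y : T, x <> y ->
    exists U V, [/\ opn U, opn V, U x, V y & forall z, U z -> V z -> False].

Definition locally_compact (T : Type) (opn : gset T -> Prop) : Prop :=
  forall x : T, exists U K, [/\ opn U, U x, compact_set opn K & forall z, U z -> K z].

Record LCGroup := {
  carrier :> Type;
  gmul : carrier -> carrier -> carrier;
  ginv : carrier -> carrier;
  gone : carrier;
  gmulA : forall x y z, gmul x (gmul y z) = gmul (gmul x y) z;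
  gmul1 : forall x, gmul gone x = x;
  gmulV : forall x, gmul (ginv x) x = gone;
  gopen : gset carrier -> Prop;
  gtop : is_topology gopen;
  (* (x, y) |-> x * y^-1 is continuous for the product topology *)
  gcont : forall (W : gset carrier) x y, gopen W -> W (gmul x (ginv y)) ->
     exists U V, [/\ gopen U, gopen V, U x, V y &
                     forall u v, U u -> V v -> W (gmul u (ginv v))];
  ghaus : hausdorff gopen;
  glc : locally_compact gopen
}.

Section Groups.
Variable G : LCGroup.

Definition subgroup (S : gset G) : Prop :=
  [/\ S (gone G),
      (forall x y, S x -> S y -> S (gmul x y)) &
      (forall x, S x -> S (ginv x))].

Definition normal_subgroup (S : gset G) : Prop :=
  subgroup S /\ forall g x, S x -> S (gmul (ginv g) (gmul x g)).

Definition discrete_subset (H : gset G) : Prop :=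
  forall h, H h -> exists2 U, @gopen G U & forall z, (U z /\ H z) <-> z = h.

Definition hom_to_rat (f : G -> rat) : Prop :=
  forall x y, f (gmul x y) = f x + f y.

End Groups.

Definition infinite_image (T : Type) (P : gset T) (f : T -> rat) : Prop :=
  ~ exists s : seq rat, forall x, P x -> f x \in s.

(* Every finitely generated subgroup of Q is cyclic, so the countable group
   phi(G) is the union of an ascending chain of cyclic groups Z q_0, Z q_1, ...
   with q_n = k_n q_(n+1).  The fibres of phi over the q_n are cosets of the
   compact group A = ker phi, and x |-> x ^ k_n maps the fibre over q_(n+1) into
   the fibre over q_n; an inverse limit of nonempty compact Hausdorff spaces is
   nonempty, which yields g_n with phi(g_n) = q_n and g_(n+1) ^ k_n = g_n.  The
   union H of the cyclic groups <g_n> is mapped by phi isomorphically onto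
   phi(G), hence is a complement of A, and it is discrete because A is open. *)

From HB Require Import structures.
From mathcomp Require Import all_boot all_order all_algebra.
From mathcomp Require Import ring lra.
From Stdlib Require Import ClassicalEpsilon.
Set Implicit Arguments. Unset Strict Implicit. Unset Printing Implicit Defensive.
Import Order.TTheory GRing.Theory Num.Theory.
Local Open Scope ring_scope.

Lemma nat_dependent_choice (U : Type) (P : nat -> U -> Prop) (R : nat -> U -> U -> Prop) :
  (exists x, P 0%N x) -> (forall n x, P n x -> exists2 y, P n.+1 y & R n x y) ->
  exists u : nat -> U, forall n, P n (u n) /\ R n (u n) (u n.+1).
Proof.
move=> [x0 Px0] PR.
have /choice [g Pg] : forall nx : nat * U,
    exists y, P nx.1 nx.2 -> P nx.1.+1 y /\ R nx.1 nx.2 y.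
  move=> [n x]; have [/PR [y Py Rxy]|nPx] := classic (P n x); first by exists y.
  by exists x => /nPx.
pose fix u n := if n is n'.+1 then g (n', u n') else x0.
have Pu n : P n (u n) by elim: n => //= n IH; case: (Pg (n, u n) IH).
by exists u => n; split => //; case: (Pg (n, u n) (Pu n)).
Qed.

Section Topology.
Variables (T : Type) (opn : gset T -> Prop).
Hypotheses (opn_top : is_topology opn) (opn_haus : hausdorff opn).

Definition continuous (f : T -> T) : Prop :=
  forall (W : gset T) x, opn W -> W (f x) ->
    exists U, [/\ opn U, U x & forall u, U u -> W (f u)].

Definition closed_set (C : gset T) : Prop :=
  forall x, ~ C x -> exists U, [/\ opn U, U x & forall z, U z -> ~ C z].

Lemma openT : opn (fun _ => True).
Proof. by case: opn_top. Qed.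

Lemma openI (U V : gset T) : opn U -> opn V -> opn (fun x => U x /\ V x).
Proof. by case: opn_top => _ _; apply. Qed.

Lemma continuous_id : continuous id.
Proof. by move=> W x oW Wx; exists W. Qed.

Lemma continuous_cst c : continuous (fun _ => c).
Proof. by move=> W x _ Wc; exists (fun _ => True); split => //; exact: openT. Qed.

Lemma continuous_comp f g : continuous f -> continuous g -> continuous (fun x => f (g x)).
Proof.
move=> cf cg W x oW /(cf _ _ oW) [U [oU Ugx UW]].
have [V [oV Vx VU]] := cg U x oU Ugx.
by exists V; split => // u /VU /UW.
Qed.

Lemma closedI (C D : gset T) :
  closed_set C -> closed_set D -> closed_set (fun x => C x /\ D x).
Proof.
move=> cC cD x nCDx; have [Cx|nCx] := classic (C x).
  have [|U [oU Ux UD]] := cD x; first by move=> Dx; apply: nCDx.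
  by exists U; split => // z /UD nDz [].
have [U [oU Ux UC]] := cC x nCx.
by exists U; split => // z /UC nCz [].
Qed.

Lemma closed_fiber f c : continuous f -> closed_set (fun x => f x = c).
Proof.
move=> cf x /opn_haus [U [V [oU oV Ufx Vc UV]]].
have [O [oO Ox OU]] := cf U x oU Ufx.
by exists O; split => // z /OU Ufz fzc; rewrite fzc in Ufz; exact: UV Ufz Vc.
Qed.

Lemma compact_set_ext (K K' : gset T) :
  (forall x, K x <-> K' x) -> compact_set opn K -> compact_set opn K'.
Proof.
move=> KK' cK F oF cov; have [|s [sF scov]] := cK F oF; first by move=> x /KK' /cov.
by exists s; split => // x /KK' /scov.
Qed.

Lemma compact_image (K : gset T) f : compact_set opn K -> continuous f ->
  compact_set opn (fun y => exists2 x, K x & f x = y).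
Proof.
move=> cK cf F oF cov.
pose F' V := opn V /\ exists2 U, F U & forall x, V x -> U (f x).
have [|x Kx|s [sF' scov]] := cK F'; first by move=> V [].
  have [U FU Ufx] := cov (f x) (ex_intro2 _ _ x Kx erefl).
  have [V [oV Vx VU]] := cf U x (oF U FU) Ufx.
  by exists V => //; split => //; exists U.
have [t [tF tcov]] : exists t : list (gset T), (forall U, List.In U t -> F U) /\
    forall V, List.In V s -> forall x, V x -> exists2 U, List.In U t & U (f x).
  elim: s sF' {scov} => [|V s IH] sF'; first by exists nil; split => // ? [].
  have [_ [U FU VU]] := sF' V (or_introl erefl).
  have [t [tF tcov]] := IH (fun W sW => sF' W (or_intror sW)).
  exists (U :: t); split=> [W [<-|tW] //|W [<-|sW] x Wx]; first exact: tF.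
    by exists U; [left | apply: VU].
  by have [U' tU' U'fx] := tcov W sW x Wx; exists U'; [right|].
exists t; split => // _ [x Kx <-].
have [V sV Vx] := scov x Kx.
exact: tcov V sV x Vx.
Qed.

Lemma compact_closed (K : gset T) : compact_set opn K -> closed_set K.
Proof.
move=> cK x nKx.
pose F O := opn O /\ exists V, [/\ opn V, V x & forall u, O u -> ~ V u].
have [|a Ka|s [sF scov]] := cK F; first by move=> O [].
  have [|U [V [oU oV Ua Vx UV]]] := @opn_haus a x.
    by move=> ax; apply: nKx; rewrite -ax.
  by exists U => //; split => //; exists V; split => // u Uu Vu; exact: UV u Uu Vu.
have [V [oV Vx sV]] : exists V,
    [/\ opn V, V x & forall O, List.In O s -> forall u, O u -> ~ V u].
  elim: s sF {scov} => [|O s IH] sF.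
    by exists (fun _ => True); split => //; exact: openT.
  have [_ [V1 [oV1 V1x OV1]]] := sF O (or_introl erefl).
  have [V2 [oV2 V2x sV2]] := IH (fun U sU => sF U (or_intror sU)).
  exists (fun u => V1 u /\ V2 u); split => //; first exact: openI.
  move=> O' [<-|sO'] u O'u [V1u V2u]; first exact: OV1 O'u V1u.
  exact: sV2 sO' u O'u V2u.
exists V; split => // z Vz Kz.
have [O sO Oz] := scov z Kz.
exact: sV O sO z Oz Vz.
Qed.

Lemma compact_nested (K : gset T) (C : nat -> gset T) : compact_set opn K ->
  (forall d, closed_set (C d)) -> (forall d x, C d.+1 x -> C d x) ->
  (forall d, exists2 x, K x & C d x) -> exists2 x, K x & forall d, C d x.
Proof.
move=> cK cC Cdec CK.
have Cmono d d' x : (d <= d')%N -> C d' x -> C d x.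
  move=> /subnKC <-; elim: (d' - d)%N => [|k IH]; first by rewrite addn0.
  by rewrite addnS => /Cdec /IH.
apply: NNPP => noK.
pose F O := opn O /\ exists d, forall z, O z -> ~ C d z.
have [|a Ka|s [sF scov]] := cK F; first by move=> O [].
  have [d nCa] : exists d, ~ C d a.
    apply: NNPP => allC; apply: noK; exists a => // d.
    by apply: NNPP => nC; apply: allC; exists d.
  have [U [oU Ua UC]] := cC d a nCa.
  by exists U => //; split => //; exists d.
have [D sD] : exists D, forall O, List.In O s -> forall z, O z -> ~ C D z.
  elim: s sF {scov} => [|O s IH] sF; first by exists 0%N.
  have [_ [d1 OC]] := sF O (or_introl erefl).
  have [d2 sC] := IH (fun U sU => sF U (or_intror sU)).
  exists (maxn d1 d2) => O' [<-|sO'] z O'z Cz.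
    exact: OC z O'z (Cmono _ _ _ (leq_maxl d1 d2) Cz).
  exact: sC O' sO' z O'z (Cmono _ _ _ (leq_maxr d1 d2) Cz).
have [a Ka Ca] := CK D.
have [O sO Oa] := scov a Ka.
exact: sD O sO a Oa Ca.
Qed.

Section InverseLimit.
Variables (X : nat -> gset T) (f : nat -> T -> T).
Hypotheses (X_compact : forall n, compact_set opn (X n))
  (X_nonempty : forall n, exists x, X n x)
  (f_cont : forall n, continuous (f n)) (f_X : forall n x, X n.+1 x -> X n (f n x)).
Arguments X_compact : clear implicits.
Arguments f_cont : clear implicits.

Fixpoint fcomp n d : T -> T :=
  if d is d'.+1 then fun x => f n (fcomp n.+1 d' x) else id.

Lemma fcompSr n d x : fcomp n d.+1 x = fcomp n d (f (n + d) x).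
Proof.
elim: d n => [|d IH] n; first by rewrite addn0.
by rewrite -[fcomp n d.+2 x]/(f n (fcomp n.+1 d.+1 x)) IH addSnnS.
Qed.

Lemma fcomp_X n d x : X (n + d) x -> X n (fcomp n d x).
Proof.
elim: d n x => [|d IH] n x /=; first by rewrite addn0.
by rewrite -addSnnS => /IH /f_X.
Qed.

Lemma continuous_fcomp n d : continuous (fcomp n d).
Proof.
elim: d n => [|d IH] n /=; first exact: continuous_id.
exact: (continuous_comp (f_cont n) (IH n.+1)).
Qed.

Let image n d y := exists2 x, X (n + d) x & fcomp n d x = y.

Let closed_image n d : closed_set (image n d).
Proof. exact: compact_closed (compact_image (X_compact (n + d)) (@continuous_fcomp n d)). Qed.

Let image_decr n d y : image n d.+1 y -> image n d y.
Proof.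
case=> x Xx <-; rewrite fcompSr; exists (f (n + d) x) => //.
by apply: f_X; rewrite -addnS.
Qed.

Let image_nonempty n d : exists2 y, X n y & image n d y.
Proof.
have [x Xx] := X_nonempty (n + d).
by exists (fcomp n d x); [exact: fcomp_X | exists x].
Qed.

(* The points of [X n] lying in the image of every later level: compactness
   makes this set nonempty, and [f n] maps [stable n.+1] onto [stable n]. *)
Let stable n y := X n y /\ forall d, image n d y.

Let stable_nonempty : exists y, stable 0%N y.
Proof.
have [y Xy Iy] := compact_nested (X_compact 0%N) (@closed_image 0%N)
  (@image_decr 0%N) (image_nonempty 0%N).
by exists y.
Qed.

Let stable_lift n y : stable n y -> exists2 z, stable n.+1 z & f n z = y.
Proof.
move=> [_ Iy].
have [||d|z Xz Cz] := compact_nested (X_compact n.+1)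
  (C := fun d z => f n z = y /\ image n.+1 d z).
- by move=> d; apply: closedI; [exact: closed_fiber | exact: @closed_image].
- by move=> d z [fzy /image_decr].
- have [x Xx fx] := Iy d.+1.
  exists (fcomp n.+1 d x); first by apply: fcomp_X; rewrite addSnnS.
  by split => //; exists x => //; rewrite addSnnS.
exists z; first by split => // d; case: (Cz d).
by case: (Cz 0%N).
Qed.

Theorem inverse_limit_nonempty :
  exists u : nat -> T, forall n, X n (u n) /\ f n (u n.+1) = u n.
Proof.
have [u Pu] := nat_dependent_choice stable_nonempty stable_lift.
by exists u => n; have [[Xu _] fu] := Pu n.
Qed.

End InverseLimit.
End Topology.

Section GroupTheory.
Variable G : LCGroup.
Implicit Types x y z : G.

Lemma gmulgV x : gmul x (ginv x) = gone G.
Proof.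
have VVx : gmul (ginv (ginv x)) (ginv x) = gone G by apply: gmulV.
rewrite -[gmul x _]gmul1 -{1}VVx -gmulA [gmul (ginv x) _]gmulA gmulV gmul1.
exact: VVx.
Qed.

Lemma gmulg1 x : gmul x (gone G) = x.
Proof. by rewrite -(gmulV x) gmulA gmulgV gmul1. Qed.

Lemma ginvK x : ginv (ginv x) = x.
Proof. by rewrite -[ginv (ginv x)]gmulg1 -(gmulV x) gmulA gmulV gmul1. Qed.

Lemma gmulI x : injective (gmul x).
Proof. by move=> y z yz; rewrite -[y]gmul1 -[z]gmul1 -(gmulV x) -!gmulA yz. Qed.

Lemma ginvM x y : ginv (gmul x y) = gmul (ginv y) (ginv x).
Proof.
apply: (@gmulI (gmul x y)); rewrite gmulgV -gmulA [gmul y _]gmulA gmulgV gmul1.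
by rewrite gmulgV.
Qed.

Lemma ginv1 : ginv (gone G) = gone G.
Proof. by rewrite -[ginv _]gmul1 gmulgV. Qed.

Lemma continuous_ginv : continuous (@gopen G) (@ginv G).
Proof.
move=> W x oW Wx.
have := @gcont G W (gone G) x oW; rewrite gmul1 => /(_ Wx) [U [V [oU oV U1 Vx UV]]].
by exists V; split => // v /(UV _ _ U1); rewrite gmul1.
Qed.

Lemma continuous_gmul f g : continuous (@gopen G) f -> continuous (@gopen G) g ->
  continuous (@gopen G) (fun x => gmul (f x) (g x)).
Proof.
move=> cf cg W x oW Wfg.
have := @gcont G W (f x) (ginv (g x)) oW; rewrite ginvK.
move=> /(_ Wfg) [U [V [oU oV Ufx Vgx UV]]].
have [O1 [oO1 O1x O1U]] := cf U x oU Ufx.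
have [O2 [oO2 O2x O2V]] := continuous_comp continuous_ginv cg oV Vgx.
exists (fun z => O1 z /\ O2 z); split => //; first exact: (openI (gtop G) oO1 oO2).
by move=> z [/O1U Ufz /O2V Vgz]; move: (UV _ _ Ufz Vgz); rewrite ginvK.
Qed.

Definition gpow x (k : nat) : G := iter k (gmul x) (gone G).

Lemma gpowD x a b : gpow x (a + b) = gmul (gpow x a) (gpow x b).
Proof. by elim: a => [|a IH]; rewrite ?gmul1 // addSn /= IH gmulA. Qed.

Lemma gpowM x a b : gpow x (a * b) = gpow (gpow x a) b.
Proof. by elim: b => [|b IH]; rewrite ?muln0 // mulnS gpowD IH. Qed.

Lemma continuous_gpow k : continuous (@gopen G) (gpow^~ k).
Proof.
elim: k => [|k IH]; first exact: continuous_cst (gtop G) _.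
exact: (@continuous_gmul id (gpow^~ k) (@continuous_id _ _) IH).
Qed.

Lemma gpow_ginv_comm x a b :
  gmul (ginv (gpow x a)) (gpow x b) = gmul (gpow x b) (ginv (gpow x a)).
Proof.
apply: (@gmulI (gpow x a)).
by rewrite gmulA gmulgV gmul1 gmulA -gpowD addnC gpowD -gmulA gmulgV gmulg1.
Qed.

(* The cyclic subgroup generated by x, described without integer exponents. *)
Definition gcycle x z := exists a b : nat, z = gmul (gpow x a) (ginv (gpow x b)).

Lemma gcycle1 x : gcycle x (gone G).
Proof. by exists 0%N, 0%N; rewrite /= ginv1 gmul1. Qed.

Lemma mem_gcycle x k : gcycle x (gpow x k).
Proof. by exists k, 0%N; rewrite /= ginv1 gmulg1. Qed.

Lemma gcycleM x y z : gcycle x y -> gcycle x z -> gcycle x (gmul y z).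
Proof.
move=> [a [b ->]] [c [d ->]]; exists (a + c)%N, (d + b)%N.
rewrite !gpowD ginvM -!gmulA; congr (gmul _ _).
by rewrite gmulA gpow_ginv_comm -gmulA.
Qed.

Lemma gcycleV x y : gcycle x y -> gcycle x (ginv y).
Proof. by move=> [a [b ->]]; exists b, a; rewrite ginvM ginvK. Qed.

Lemma gcycleX x k z : gcycle (gpow x k) z -> gcycle x z.
Proof. by move=> [a [b ->]]; exists (k * a)%N, (k * b)%N; rewrite !gpowM. Qed.

End GroupTheory.

Section Homomorphism.
Variables (G : LCGroup) (phi : G -> rat).
Hypothesis phiM : hom_to_rat phi.

Lemma hom1 : phi (gone G) = 0.
Proof. by move: (phiM (gone G) (gone G)); rewrite gmul1; lra. Qed.

Lemma homV x : phi (ginv x) = - phi x.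
Proof. by move: (phiM (ginv x) x); rewrite gmulV hom1; lra. Qed.

Lemma hom_gpow x k : phi (gpow x k) = k%:R * phi x.
Proof.
elim: k => [|k IH]; first by rewrite mul0r hom1.
by rewrite /= phiM IH mulrSr mulrDl mul1r addrC.
Qed.

Lemma hom_imageB u v : (exists g, phi g = u) -> (exists g, phi g = v) ->
  exists g, phi g = u - v.
Proof. by move=> [g <-] [h <-]; exists (gmul g (ginv h)); rewrite phiM homV. Qed.

Lemma hom_infinite_pos : infinite_image (fun _ => True) phi -> exists g, 0 < phi g.
Proof.
move=> phi_inf; have [g] : exists g, phi g != 0.
  apply: NNPP => phi0; apply: phi_inf; exists [:: 0] => g _; rewrite inE.
  by apply: NNPP => /negP phig; apply: phi0; exists g.
rewrite neq_lt => /orP [phig_lt0|]; last by exists g.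
by exists (ginv g); rewrite homV oppr_gt0.
Qed.

Lemma gcycle_hom_inj x y z :
  phi x != 0 -> gcycle x y -> gcycle x z -> phi y = phi z -> y = z.
Proof.
move=> phix_neq0 xy xz phiyz.
have [a [b yzE]] := gcycleM xy (gcycleV xz).
have /eqP : (a%:R - b%:R) * phi x = 0.
  by rewrite mulrBl -!hom_gpow -homV -phiM -yzE phiM homV phiyz subrr.
rewrite mulf_eq0 (negbTE phix_neq0) orbF subr_eq0 eqr_nat => /eqP ab.
rewrite ab gmulgV in yzE.
by rewrite -[y]gmulg1 -(gmulV z) gmulA yzE gmul1.
Qed.

Lemma gcycle_hom_intmul x (j : int) : exists2 z, gcycle x z & phi z = j%:~R * phi x.
Proof.
case: j => k; first by exists (gpow x k); [exact: mem_gcycle | rewrite hom_gpow].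
exists (ginv (gpow x k.+1)); first exact/gcycleV/mem_gcycle.
by rewrite homV hom_gpow NegzE mulrNz mulNr.
Qed.

End Homomorphism.

Section RatSubgroup.
Variable S : rat -> Prop.
Hypotheses (S0 : S 0) (SB : forall x y, S x -> S y -> S (x - y)).

Lemma rat_subgroupN x : S x -> S (- x).
Proof. by move=> Sx; rewrite -sub0r; apply: SB. Qed.

Lemma rat_subgroupD x y : S x -> S y -> S (x + y).
Proof. by move=> Sx Sy; rewrite -[y]opprK; apply/SB/rat_subgroupN. Qed.

Lemma rat_subgroup_intmul (j : int) x : S x -> S (j%:~R * x).
Proof.
move=> Sx; have Snat n : S (n%:R * x).
  by elim: n => [|n IH]; rewrite ?mul0r // mulrSr mulrDl mul1r; apply: rat_subgroupD.
case: j => n; first exact: Snat.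
by rewrite NegzE mulrNz mulNr; apply/rat_subgroupN/Snat.
Qed.

Lemma rat_subgroup_gcd q r : 0 < q -> S q -> S r ->
  exists2 q', S q' /\ 0 < q' &
    (exists k : nat, q = k%:R * q') /\ exists j : int, r = j%:~R * q'.
Proof.
move=> q_gt0 Sq Sr.
have [N [a [c [N_gt0 qE rE]]]] : exists N a c : int,
    [/\ 0 < N, q = a%:~R / N%:~R & r = c%:~R / N%:~R].
  exists (denq q * denq r), (numq q * denq r), (numq r * denq q).
  have N_neq0 : (denq q * denq r)%:~R != 0 :> rat by rewrite intr_eq0 mulf_neq0.
  split; first by rewrite mulr_gt0 ?denq_gt0.
    by apply: (canRL (mulfK N_neq0)); rewrite !intrM numqE; ring.
  by apply: (canRL (mulfK N_neq0)); rewrite !intrM numqE; ring.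
have N_neq0 : N%:~R != 0 :> rat by rewrite intr_eq0 gt_eqF.
have a_gt0 : 0 < a.
  by rewrite -(ltr0z rat) -(divfK N_neq0 a%:~R) -qE mulr_gt0 ?ltr0z.
have g_gt0 : 0 < gcdz a c by rewrite lt_def gcdz_eq0 (gt_eqF a_gt0).
have [u [v uvE]] := Bezoutz a c.
have [k akE] := dvdzP (dvdz_gcdl a c).
have [j cjE] := dvdzP (dvdz_gcdr a c).
(* q' = gcd(a, c) / N is an integral combination of q and r (Bezout). *)
exists ((gcdz a c)%:~R / N%:~R).
  split; last by rewrite divr_gt0 ?ltr0z.
  have -> : (gcdz a c)%:~R / N%:~R = u%:~R * q + v%:~R * r.
    by rewrite qE rE -uvE intrD !intrM; field.
  by apply: rat_subgroupD; apply: rat_subgroup_intmul.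
split; last by exists j; rewrite rE {1}cjE intrM mulrA.
have k_gt0 : 0 < k by rewrite -(pmulr_lgt0 _ g_gt0) -akE.
case: k k_gt0 akE => // n _ akE.
by exists n; rewrite qE {1}akE intrM mulrA.
Qed.

Lemma rat_subgroup_chain q0 : 0 < q0 -> S q0 ->
  exists qs : nat -> rat, [/\ forall n, S (qs n), forall n, 0 < qs n,
    forall n, exists k : nat, qs n = k%:R * qs n.+1 &
    forall x, S x -> exists n (j : int), x = j%:~R * qs n].
Proof.
move=> q0_gt0 Sq0.
(* [r] enumerates Q; step n makes [r n] a multiple of [qs n.+1] if it lies in S. *)
pose r n : rat := odflt 0 (unpickle n).
have step n q : S q /\ 0 < q -> exists2 q', S q' /\ 0 < q' &
    (exists k : nat, q = k%:R * q') /\ (S (r n) -> exists j : int, r n = j%:~R * q').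
  move=> [Sq q_gt0]; have [Sr|nSr] := classic (S (r n)).
    by have [q' Pq' [kq jr]] := rat_subgroup_gcd q_gt0 Sq Sr; exists q'.
  by exists q => //; split=> [|/nSr //]; exists 1%N; rewrite mul1r.
have [qs Pqs] := nat_dependent_choice (ex_intro _ q0 (conj Sq0 q0_gt0)) step.
exists qs; split=> [n|n|n|x Sx]; try by have [[] ? ? []] := Pqs n.
have [_ [_ /(_ _)]] := Pqs (pickle x); rewrite /r pickleK /= => /(_ Sx) [j xE].
by exists (pickle x).+1, j.
Qed.

End RatSubgroup.

Section Lifting.
Variables (G : LCGroup) (A : gset G) (phi : G -> rat).
Hypotheses (A_compact : compact_set (@gopen G) A) (phiM : hom_to_rat phi)
  (kerphi : forall x, phi x = 0 <-> A x).

Lemma compact_hom_fiber q : (exists g, phi g = q) ->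
  compact_set (@gopen G) (fun x => phi x = q).
Proof.
move=> [g <-].
have cgA := compact_image A_compact
  (@continuous_gmul G (fun=> g) id (@continuous_cst _ _ (gtop G) g) (@continuous_id _ _)).
apply: compact_set_ext cgA => x; split=> [[a /kerphi phia <-]|phix].
  by rewrite phiM phia addr0.
exists (gmul (ginv g) x); last by rewrite gmulA gmulgV gmul1.
by apply/kerphi; rewrite phiM homV // phix addNr.
Qed.

Lemma lift_divisor_chain (qs : nat -> rat) (ks : nat -> nat) :
  (forall n, exists g, phi g = qs n) -> (forall n, qs n = (ks n)%:R * qs n.+1) ->
  exists gs : nat -> G, forall n, phi (gs n) = qs n /\ gpow (gs n.+1) (ks n) = gs n.
Proof.
move=> qs_img qsE.
have [||n|n x phix|gs gsE] := @inverse_limit_nonempty _ _ (@gtop G) (@ghaus G)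
  (fun n x => phi x = qs n) (fun n x => gpow x (ks n)).
- by move=> n; apply: compact_hom_fiber.
- exact: qs_img.
- exact: continuous_gpow.
- by rewrite hom_gpow // phix -qsE.
by exists gs.
Qed.

End Lifting.

Section Complement.
Variables (G : LCGroup) (A : gset G) (phi : G -> rat) (gs : nat -> G).
Hypotheses (A_open : @gopen G A) (phiM : hom_to_rat phi)
  (kerphi : forall x, phi x = 0 <-> A x) (gs_neq0 : forall n, phi (gs n) != 0)
  (gs_root : forall n, exists k, gpow (gs n.+1) k = gs n)
  (gs_span : forall g, exists n (j : int), phi g = j%:~R * phi (gs n)).
Arguments gs_neq0 : clear implicits.
Arguments gs_root : clear implicits.
Arguments gs_span : clear implicits.

Definition gcycle_union z := exists n, gcycle (gs n) z.

Lemma gcycle_gs_mono n n' z : (n <= n')%N -> gcycle (gs n) z -> gcycle (gs n') z.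
Proof.
move=> /subnKC <-; elim: (n' - n)%N => [|d IH]; first by rewrite addn0.
move=> /IH; have [k <-] := gs_root (n + d); rewrite addnS; exact: gcycleX.
Qed.

Lemma gcycle_union2 x y : gcycle_union x -> gcycle_union y ->
  exists n, gcycle (gs n) x /\ gcycle (gs n) y.
Proof.
move=> [n xn] [n' yn']; exists (maxn n n').
by split; [exact: gcycle_gs_mono (leq_maxl n n') xn |
            exact: gcycle_gs_mono (leq_maxr n n') yn'].
Qed.

Lemma subgroup_gcycle_union : subgroup gcycle_union.
Proof.
split; first by exists 0%N; exact: gcycle1.
  move=> x y Hx Hy; have [n [xn yn]] := gcycle_union2 Hx Hy.
  by exists n; exact: gcycleM.
by move=> x [n xn]; exists n; exact: gcycleV.
Qed.

Lemma gcycle_union_hom_inj x y :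
  gcycle_union x -> gcycle_union y -> phi x = phi y -> x = y.
Proof.
move=> Hx Hy; have [n [xn yn]] := gcycle_union2 Hx Hy.
exact: (gcycle_hom_inj phiM (gs_neq0 n) xn yn).
Qed.

Lemma gcycle_union_hom_onto g : exists2 h, gcycle_union h & phi h = phi g.
Proof.
have [n [j ->]] := gs_span g; have [h hn <-] := gcycle_hom_intmul phiM (gs n) j.
by exists h => //; exists n.
Qed.

Lemma discrete_gcycle_union : discrete_subset gcycle_union.
Proof.
move=> h Hh.
have Ah : A (gmul h (ginv h)) by rewrite gmulgV; apply/kerphi/hom1.
have [U [oU Uh UA]] := @continuous_gmul G id (fun=> ginv h)
  (@continuous_id _ _) (@continuous_cst _ _ (gtop G) (ginv h)) _ _ A_open Ah.
exists U => // z; split=> [[Uz Hz]|->] //.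
apply: gcycle_union_hom_inj => //; apply/eqP; rewrite -subr_eq0 -(homV phiM) -phiM.
exact/eqP/kerphi/UA.
Qed.

Lemma kernel_mul_gcycle_union g : exists a h, [/\ A a, gcycle_union h & g = gmul a h].
Proof.
have [h Hh phih] := gcycle_union_hom_onto g.
exists (gmul g (ginv h)), h; split => //; last by rewrite -gmulA gmulV gmulg1.
by apply/kerphi; rewrite phiM homV // phih addrN.
Qed.

Lemma kernel_cap_gcycle_union x : A x -> gcycle_union x -> x = gone G.
Proof.
move=> /kerphi phix Hx; apply: gcycle_union_hom_inj => //.
  by exists 0%N; exact: gcycle1.
by rewrite phix hom1.
Qed.

End Complement.

Theorem theorem4p6 (G : LCGroup) (A : gset G)
  (hA : normal_subgroup A) (hAopen : @gopen G A) (hAcpt : compact_set (@gopen G) A)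
  (phi : G -> rat) (hphi : hom_to_rat phi)
  (hker : forall x, phi x = 0 <-> A x)
  (hinf : infinite_image (fun _ => True) phi) :
  exists H : gset G,
    [/\ subgroup H,
        discrete_subset H,
        (* H ≅ G/A (≅ phi(G)) *)
        (exists psi : G -> rat,
           [/\ forall x y, H x -> H y -> psi (gmul x y) = psi x + psi y,
               forall x y, H x -> H y -> psi x = psi y -> x = y &
               forall q, (exists h, H h /\ psi h = q) <-> (exists g, phi g = q)]),
        (* G = A H *)
        (forall g, exists a h, [/\ A a, H h & g = gmul a h]) &
        (* A ∩ H = {1} *)
        (forall x, A x -> H x -> x = gone G)].
Proof.
have [g0 phig0_gt0] := hom_infinite_pos hphi hinf.
have image0 : exists g, phi g = 0 by exists (gone G); exact: hom1.
have [qs [qs_img qs_gt0 /choice [ks ksE] qs_span]] :=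
  rat_subgroup_chain image0 (hom_imageB hphi) phig0_gt0 (ex_intro _ g0 erefl).
have [gs gsE] := lift_divisor_chain hAcpt hphi hker qs_img ksE.
have gs_neq0 n : phi (gs n) != 0 by rewrite (gsE n).1 gt_eqF.
have gs_root n : exists k, gpow (gs n.+1) k = gs n by exists (ks n); case: (gsE n).
have gs_span g : exists n (j : int), phi g = j%:~R * phi (gs n).
  by have [n [j ->]] := qs_span _ (ex_intro _ g erefl); exists n, j; rewrite (gsE n).1.
exists (gcycle_union gs); split.
- exact: subgroup_gcycle_union.
- exact: (discrete_gcycle_union hAopen hphi hker gs_neq0 gs_root).
- exists phi; split=> [x y _ _|x y|q]; first exact: hphi.
    exact: (gcycle_union_hom_inj hphi gs_neq0 gs_root).
  split=> [[h [_ <-]]|[g <-]]; first by exists h.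
  by have [h Hh <-] := gcycle_union_hom_onto hphi gs_span g; exists h.
- exact: (kernel_mul_gcycle_union hphi hker gs_span).
- exact: (kernel_cap_gcycle_union hphi hker gs_neq0 gs_root).
Qed.
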